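(* Let $X$ be as in the standing setting with skeleton $X_1,\dots,X_k$. Suppose $x\in X$ lies in no $\operatorname{span}X_l$ and $x\in\operatorname{pos}\{x_i,x_j\}$ with $x_i\in X_i$, $x_j\in X_j$, $i\ne j$. If $y\in X\setminus X_i$ lies in $\operatorname{span}X_i$, then the support $S_y$ of $y$ does not contain $x_i$.
   Context: Standing setting: $X\subset\mathbb R^n\setminus\{0\}$ is a finite set such that $0$ lies in the interior of $\operatorname{conv}X$, no element of $X$ is a positive multiple of another, and every $n+1$ points of $X$ are in good position. A finite set $A$ is in conical position if $0\notin\operatorname{conv}A$ and no point of $A$ lies in the positive hull (set of nonnegative linear combinations, denoted $\operatorname{pos}$) of the other points; it is in good position otherwise. A skeleton of $X$ is a collection of pairwise disjoint subsets $X_1,\dots,X_k\subseteq X$ such that each $X_i$ is the vertex set of a simplex whose relative interior contains $0$ and $\mathbb R^n=\operatorname{span}X_1\oplus\cdots\oplus\operatorname{span}X_k$. For a nonzero $y\in\operatorname{span}X_i$, its support $S_y$ is the minimal subset of $X_i$ whose positive hull contains $y$. *)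

From HB Require Import structures.
From mathcomp Require Import all_boot all_order all_algebra.
From mathcomp Require Import finmap.
From mathcomp Require Import reals.

Set Implicit Arguments.
Unset Strict Implicit.
Unset Printing Implicit Defensive.

Import Order.TTheory GRing.Theory Num.Theory.
Local Open Scope ring_scope.
Local Open Scope fset_scope.

Section Defs.
Variables (R : realType) (n : nat).
Notation V := 'rV[R]_n.

Definition in_conv (A : {fset V}) (v : V) : Prop :=
  exists c : V -> R, (forall a, a \in A -> 0 <= c a) /\
    \sum_(a <- A) c a = 1 /\ v = \sum_(a <- A) c a *: a.

Definition in_pos (A : {fset V}) (v : V) : Prop :=
  exists c : V -> R, (forall a, a \in A -> 0 <= c a) /\
    v = \sum_(a <- A) c a *: a.

Definition in_span (A : {fset V}) (v : V) : Prop :=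
  exists c : V -> R, v = \sum_(a <- A) c a *: a.

(* interior (w.r.t. the standard topology of R^n, using sup-norm balls) *)
Definition in_interior_conv (A : {fset V}) (v : V) : Prop :=
  exists eps : R, 0 < eps /\
    forall w : V, (forall j, `|w 0 j - v 0 j| < eps) -> in_conv A w.

Definition conical_position (A : {fset V}) : Prop :=
  ~ in_conv A 0 /\ forall a, a \in A -> ~ in_pos (A `\ a) a.

Definition good_position (A : {fset V}) : Prop := ~ conical_position A.

Definition standing_setting (X : {fset V}) : Prop :=
  [/\ (0 : V) \notin X,
      in_interior_conv X 0,
      (forall a b, a \in X -> b \in X -> a != b ->
         forall t : R, 0 < t -> a <> t *: b)
    & (forall A : {fset V}, A `<=` X -> #|` A| = n.+1 -> good_position A)].

Definition aff_indep (A : {fset V}) : Prop :=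
  forall c : V -> R, \sum_(a <- A) c a = 0 -> \sum_(a <- A) c a *: a = 0 ->
    forall a, a \in A -> c a = 0.

(* A is the vertex set of a simplex whose relative interior contains 0:
   A is nonempty, affinely independent, and 0 has strictly positive
   barycentric coordinates w.r.t. A *)
Definition simplex_relint0 (A : {fset V}) : Prop :=
  [/\ A != fset0, aff_indep A &
      exists c : V -> R, (forall a, a \in A -> 0 < c a) /\
        \sum_(a <- A) c a = 1 /\ \sum_(a <- A) c a *: a = 0].

Definition direct_sum_spans (k : nat) (Xs : 'I_k -> {fset V}) : Prop :=
  (forall v : V, exists w : 'I_k -> V,
      (forall i, in_span (Xs i) (w i)) /\ v = \sum_(i < k) w i) /\
  (forall w : 'I_k -> V, (forall i, in_span (Xs i) (w i)) ->
      \sum_(i < k) w i = 0 -> forall i, w i = 0).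

Definition skeleton (X : {fset V}) (k : nat) (Xs : 'I_k -> {fset V}) : Prop :=
  [/\ forall i, Xs i `<=` X,
      forall i j, i != j -> [disjoint Xs i & Xs j],
      forall i, simplex_relint0 (Xs i)
    & direct_sum_spans Xs].

Definition is_support (B : {fset V}) (y : V) (S : {fset V}) : Prop :=
  [/\ S `<=` B, in_pos S y &
      forall T : {fset V}, T `<` S -> ~ in_pos T y].

End Defs.

(* Suppose xi is in S and write y = c_xi xi + sum_{z in S'} c_z z with
   S' = S \ xi.  Minimality of S makes all c_z positive and S linearly
   independent, and x in no span X_l makes a, b positive.  Eliminating xi,
       x = (a / c_xi) y + b xj - sum_{z in S'} (a c_z / c_xi) z.
   The set T = {xj, y} u S' is free (y replaces xi in S by exchange; xj is a
   nonzero vector of another summand of the direct sum), so, X spanning R^n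
   because 0 is interior to conv X, T extends inside X to a basis B.  In B,
   x has positive coordinates at y and xj and a negative one at any z in S'
   (S' is nonempty since y is not a positive multiple of xi).  Such an x
   lies outside B and x with B is in conical position; as these are n + 1
   points of X, this contradicts the standing assumption. *)
From HB Require Import structures.
From mathcomp Require Import all_boot all_order all_algebra.
From mathcomp Require Import finmap.
From mathcomp Require Import reals.
From mathcomp.algebra_tactics Require Import ring lra.
Import Order.TTheory GRing.Theory Num.Theory.
Local Open Scope fset_scope.
Local Open Scope ring_scope.
Set Implicit Arguments.
Unset Strict Implicit.
Unset Printing Implicit Defensive.

Section LinearAlgebra.
Variables (R : realType) (n : nat).
Notation V := 'rV[R]_n.
Implicit Types (A B S T X : {fset V}) (u v w : V).

Lemma span_coefs (s : seq V) v : uniq s -> v \in <<s>>%VS ->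
  exists c : V -> R, v = \sum_(a <- s) c a *: a.
Proof.
elim: s v => [|u s IH] v.
  by rewrite span_nil memv0 => _ /eqP ->; exists (fun=> 0); rewrite big_nil.
move=> /andP[us Us]; rewrite span_cons => /memv_addP[_ /vlineP[t ->] [w ws ->]].
have [c ->] := IH w Us ws.
exists (fun a => if a == u then t else c a); rewrite big_cons eqxx; congr (_ + _).
by apply: eq_big_seq => a aS; rewrite (negbTE (memPn us a aS)).
Qed.

Lemma in_spanP A v : in_span A v <-> v \in <<A>>%VS.
Proof.
split=> [[c ->]|]; last exact: span_coefs (fset_uniq A).
by rewrite big_seq; apply: memv_suml => a aA; apply/memvZ/memv_span.
Qed.

(* A set whose convex hull has 0 as an interior point spans the whole space:
   a small multiple of every unit vector lies in the convex hull. *)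
Lemma interior_span_full X : in_interior_conv X 0 -> <<X>>%VS = fullv.
Proof.
move=> [eps [eps0 Hball]]; apply/eqP; rewrite eqEsubv subvf /=.
have conv_span w : in_conv X w -> w \in <<X>>%VS.
  by move=> [c [_ [_ ->]]]; apply/in_spanP; exists c.
apply/subvP => v _; rewrite (row_sum_delta v); apply: memv_suml => m _.
apply: memvZ; have : (eps / 2) *: 'e_m \in <<X>>%VS.
  apply: conv_span; apply: Hball => m'; rewrite !mxE subr0.
  by case: (m' == m); rewrite /= ?mulr1 ?mulr0 ?normr0 // ger0_norm; lra.
move=> /(memvZ (2 / eps)); rewrite scalerA.
have -> : 2 / eps * (eps / 2) = 1 by field; rewrite gt_eqF.
by rewrite scale1r.
Qed.

Lemma skeleton_span_meet0 X k (Xs : 'I_k -> {fset V}) i j v :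
  skeleton X Xs -> i != j -> in_span (Xs i) v -> in_span (Xs j) v -> v = 0.
Proof.
move=> [_ _ _ [_ Hds]] ij vi vj.
pose w l := if l == i then v else if l == j then - v else 0.
have ji : j != i by rewrite eq_sym.
have wspan l : in_span (Xs l) (w l).
  rewrite /w; case: eqP => [->|_] //; case: eqP => [->|_]; apply/in_spanP.
  - by rewrite rpredN; apply/in_spanP.
  - exact: mem0v.
have wsum : \sum_(l < k) w l = 0.
  rewrite (bigD1 i) //= (bigD1 j) //= big1 => [|l /andP[li lj]].
    by rewrite /w eqxx (negbTE ji) eqxx addr0 subrr.
  by rewrite /w (negbTE li) (negbTE lj).
by have := Hds w wspan wsum i; rewrite /w eqxx.
Qed.

Definition lin_indep A : Prop :=
  forall mu : V -> R, \sum_(a <- A) mu a *: a = 0 -> forall a, a \in A -> mu a = 0.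

Lemma lin_indepP A : lin_indep A <-> free A.
Proof.
split=> [indep | freeA mu mu0 a aA].
  rewrite -[enum_fset A]in_tupleE; apply/freeP => t t0 m.
  pose mu a := t (insubd m (index a A)).
  have mu_nth (m' : 'I_#|` A|) : mu A`_m' = t m'.
    by rewrite /mu index_uniq ?fset_uniq // valKd.
  rewrite -mu_nth; apply: indep _ (mem_nth 0 (ltn_ord m)).
  rewrite (big_nth 0) big_mkord; apply: etrans t0.
  by apply: eq_bigr => m' _; rewrite mu_nth.
have [t _ tuniq] := free_span freeA (mem0v <<A>>%VS).
rewrite (tuniq mu (esym mu0) a aA) (tuniq (fun=> 0) _ a aA) //.
by rewrite big1 // => b _; rewrite scale0r.
Qed.

Lemma free_fsetU1 A v : v \notin A ->
  free (v |` A) = (v \notin <<A>>%VS) && free A.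
Proof.
move=> vA; rewrite -free_cons; apply/perm_free/uniq_perm => [||z].
- exact: fset_uniq.
- by rewrite /= vA fset_uniq.
- by rewrite !inE.
Qed.

Lemma free_exchange S a (c : V -> R) : free S -> a \in S -> c a != 0 ->
  \sum_(z <- S) c z *: z \notin <<S `\ a>>%VS.
Proof.
move=> freeS aS ca0; rewrite (big_fsetD1 _ aS) /=.
have : free (a |` S `\ a) by rewrite fsetD1K.
rewrite free_fsetU1 ?fsetD11 // => /andP[aNspan _]; apply: contra aNspan.
have restS : \sum_(z <- S `\ a) c z *: z \in <<S `\ a>>%VS.
  by apply/in_spanP; exists c.
move=> /memvB/(_ restS); rewrite addrK => /(memvZ (c a)^-1).
by rewrite scalerA mulVf // scale1r.
Qed.

Lemma in_pos_drop S y (c : V -> R) s : s \in S -> c s = 0 ->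
  (forall a, a \in S -> 0 <= c a) -> y = \sum_(a <- S) c a *: a ->
  in_pos (S `\ s) y.
Proof.
move=> sS cs c0 ->; exists c; split.
  by move=> a; rewrite in_fsetD1 => /andP[_]; apply: c0.
by rewrite (big_fsetD1 _ sS) /= cs scale0r add0r.
Qed.

(* Minimality of a positive representation of y over S forbids a linear
   relation with a positive coefficient: subtracting the largest admissible
   multiple of it would kill one coefficient of the representation. *)
Lemma support_relation_nonpos S y :
  in_pos S y -> (forall T, T `<` S -> ~ in_pos T y) ->
  forall mu : V -> R, \sum_(a <- S) mu a *: a = 0 -> forall a, a \in S -> mu a <= 0.
Proof.
move=> [c [c0 yc]] Smin mu mu0 a aS; rewrite leNgt; apply/negP => mua.
have [[s sS] /= mus smin] := @arg_minP _ R S [` aS]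
  (fun b => 0 < mu (val b)) (fun b => c (val b) / mu (val b)) mua.
pose t := c s / mu s; pose d b := c b - t * mu b.
have d0 b : b \in S -> 0 <= d b.
  move=> bS; rewrite /d subr_ge0; case: (ltP 0 (mu b)) => mub.
    by rewrite -ler_pdivlMr //; exact: (smin [` bS]).
  apply: le_trans (c0 b bS); apply: mulr_ge0_le0 => //.
  by rewrite divr_ge0 // ?c0 // ltW.
have ds : d s = 0 by rewrite /d /t divfK ?subrr // gt_eqF.
apply: (Smin _ (fproperD1 sS)); apply: (in_pos_drop sS ds d0).
have -> : \sum_(b <- S) d b *: b = \sum_(b <- S) c b *: b - t *: \sum_(b <- S) mu b *: b.
  by rewrite scaler_sumr -sumrB; apply: eq_bigr => b _; rewrite scalerBl scalerA.
by rewrite mu0 scaler0 subr0.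
Qed.

Lemma support_free S y :
  in_pos S y -> (forall T, T `<` S -> ~ in_pos T y) -> free S.
Proof.
move=> yS Smin; apply/lin_indepP => mu mu0 a aS; apply/eqP.
rewrite eq_le (support_relation_nonpos yS Smin mu0 aS) -oppr_le0.
apply: (support_relation_nonpos yS Smin (mu := fun b => - mu b)) aS.
rewrite (eq_bigr (fun b => - (mu b *: b))) => [|b _]; last by rewrite scaleNr.
by rewrite sumrN mu0 oppr0.
Qed.

Lemma support_coef_pos S y (c : V -> R) :
  (forall T, T `<` S -> ~ in_pos T y) -> (forall a, a \in S -> 0 <= c a) ->
  y = \sum_(a <- S) c a *: a -> forall a, a \in S -> 0 < c a.
Proof.
move=> Smin c0 yc a aS; rewrite lt_neqAle c0 // andbT; apply/eqP => ca.
exact: Smin _ (fproperD1 aS) (in_pos_drop aS (esym ca) c0 yc).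
Qed.

Lemma extend_free (Y s : seq V) : free s ->
  exists e, [/\ {subset e <= Y}, free (e ++ s) & (<<Y>> <= <<e ++ s>>)%VS].
Proof.
elim: Y s => [|u Y IH] s freeS.
  by exists [::]; split => //; rewrite span_nil sub0v.
have [us|uNs] := boolP (u \in <<s>>%VS).
  have [e [eY freeeS Ysub]] := IH s freeS; exists e; split => //.
    by move=> z /eY zY; rewrite in_cons zY orbT.
  apply/span_subvP => z; rewrite in_cons => /orP[/eqP ->|zY].
    by apply: (subvP (sub_span _)) us => w ws; rewrite mem_cat ws orbT.
  exact: (subvP Ysub) _ (memv_span zY).
have freeuS : free (u :: s) by rewrite free_cons uNs.
have [e [eY freeeuS Ysub]] := IH (u :: s) freeuS.
exists (rcons e u); rewrite cat_rcons; split => //.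
  by move=> z; rewrite mem_rcons in_cons => /orP[/eqP ->|/eY zY];
    rewrite in_cons ?eqxx ?zY ?orbT.
apply/span_subvP => z; rewrite in_cons => /orP[/eqP ->|zY].
  by apply: memv_span; rewrite mem_cat mem_head orbT.
exact: (subvP Ysub) _ (memv_span zY).
Qed.

Lemma basis_extension X T : <<X>>%VS = fullv -> T `<=` X -> free T ->
  exists B : {fset V}, [/\ T `<=` B, B `<=` X, free B & #|` B| = n].
Proof.
move=> Xfull TX freeT; have [e [eX freeeT Xsub]] := extend_free X freeT.
pose B := seq_fset tt (e ++ T).
have memB z : (z \in B) = (z \in e ++ T) by rewrite seq_fsetE.
have permB : perm_eq B (e ++ T).
  by apply: uniq_perm; rewrite ?fset_uniq ?free_uniq.
exists B; split.
- by apply/fsubsetP => z zT; rewrite memB mem_cat zT orbT.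
- by apply/fsubsetP => z; rewrite memB mem_cat => /orP[/eX|/(fsubsetP TX)].
- by rewrite (perm_free permB).
have eTfull : <<e ++ T>>%VS = fullv.
  by apply/eqP; rewrite eqEsubv subvf -Xfull.
rewrite (perm_size permB) -(eqP freeeT) eTfull dimvf /= dim_matrix; exact: mul1n.
Qed.

Lemma mul_pos_add_eq0 (s t u : R) : 0 < t -> 0 <= s -> 0 <= u -> s * t + u = 0 -> s = 0.
Proof. move=> *; nra. Qed.

Lemma sum_coords_incl T B (l : V -> R) : T `<=` B ->
  \sum_(z <- T) l z *: z = \sum_(z <- B) (if z \in T then l z else 0) *: z.
Proof.
move=> TB; rewrite -(big_fset_incl _ TB) => [|z _ /negbTE ->]; last by rewrite scale0r.
by apply: eq_fbigr => z zT _; rewrite zT.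
Qed.

Section SignedCoordinates.
Variables (B : {fset V}) (x p q1 q2 : V) (l : V -> R).
Hypotheses (freeB : free B) (xl : x = \sum_(z <- B) l z *: z).
Hypotheses (pB : p \in B) (lp : l p < 0).
Hypotheses (q1B : q1 \in B) (q2B : q2 \in B) (q12 : q1 != q2).
Hypotheses (lq1 : 0 < l q1) (lq2 : 0 < l q2).

Lemma relation_coords (t : R) (d : V -> R) :
  t *: x + \sum_(z <- B) d z *: z = 0 -> forall z, z \in B -> t * l z + d z = 0.
Proof.
move=> rel; apply: (proj2 (lin_indepP B) freeB (fun z => t * l z + d z)).
apply: etrans rel; rewrite xl scaler_sumr -big_split.
by apply: eq_bigr => z _; rewrite scalerDl scalerA.
Qed.

Lemma other_pos_coord a : exists2 q, q \in B & (q != a) && (0 < l q).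
Proof.
have [q1a|] := eqVneq q1 a; last by exists q1; rewrite // lq1 andbT.
by exists q2; rewrite // lq2 andbT -q1a eq_sym.
Qed.

(* x is not in B: its coordinates would then be those of a basis vector. *)
Lemma signed_coords_notin : x \notin B.
Proof.
apply/negP => xB; have [q qB /andP[qx lq]] := other_pos_coord x.
have sum_x : \sum_(z <- B) (z == x)%:R *: z = x.
  rewrite (big_fsetD1 _ xB) /= eqxx scale1r big1_fset ?addr0 // => z.
  by rewrite in_fsetD1 => /andP[/negbTE -> _] _; rewrite scale0r.
have rel : 1 *: x + \sum_(z <- B) (- (z == x)%:R) *: z = 0.
  by rewrite scale1r (eq_bigr _ (fun z _ => scaleNr _ z)) sumrN sum_x subrr.
have := relation_coords rel qB; rewrite (negbTE qx) mul1r oppr0 addr0 => lq0.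
by move: lq; rewrite lq0 ltxx.
Qed.

(* In a convex combination of x and B equal to 0, the coordinate at q1
   forces the weight of x, hence all weights, to vanish. *)
Lemma signed_coords_no_conv0 : ~ in_conv (x |` B) 0.
Proof.
have xB := signed_coords_notin.
move=> [c [c0 [c1 rel]]]; rewrite big_fsetU1 //= in c1.
rewrite big_fsetU1 //= in rel; have coords := relation_coords (esym rel).
have cx0 : c x = 0.
  exact: mul_pos_add_eq0 lq1 (c0 x (fset1U1 _ _)) (c0 q1 (fset1Ur _ q1B))
    (coords q1 q1B).
move: c1; rewrite cx0 add0r big1_fset => [|z zB _].
  by move/eqP; rewrite eq_sym oner_eq0.
by have := coords z zB; rewrite cx0 mul0r add0r.
Qed.

(* A positive combination of B has no negative coordinate. *)
Lemma signed_coords_notin_pos : ~ in_pos B x.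
Proof.
move=> [c [c0 xc]]; have rel : 1 *: x + \sum_(z <- B) (- c z) *: z = 0.
  by rewrite scale1r (eq_bigr _ (fun z _ => scaleNr _ z)) sumrN -xc subrr.
have := relation_coords rel pB; rewrite mul1r => /subr0_eq lpc.
by have := c0 p pB; rewrite -lpc leNgt lp.
Qed.

(* A point a of B in the positive hull of x and the rest of B: a positive
   coordinate at some q != a forces the weight of x to vanish, contradicting
   the independence of B. *)
Lemma signed_coords_vertex_notin_pos a : a \in B -> ~ in_pos ((x |` B) `\ a) a.
Proof.
move=> aB [c [c0 ac]]; have xB := signed_coords_notin.
have xa : x != a by apply: contraNneq xB => ->.
have eqD : (x |` B) `\ a = x |` (B `\ a).
  by apply/fsetP => z; rewrite !inE; case: (eqVneq z x) => [->|] //=; rewrite xa.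
rewrite eqD big_fsetU1 ?in_fsetD1 ?(negbTE xB) ?andbF //= in ac.
pose d z := if z == a then -1 else c z.
have rel : c x *: x + \sum_(z <- B) d z *: z = 0.
  rewrite (big_fsetD1 _ aB) /= /d eqxx scaleN1r.
  rewrite (@eq_fbigr _ _ _ _ _ _ _ (fun z => c z *: z)); last first.
    by move=> z; rewrite in_fsetD1 => /andP[/negbTE -> _].
  by rewrite addrCA -ac addNr.
have [q qB /andP[qa lq]] := other_pos_coord a.
have cq : 0 <= c q by apply: c0; rewrite eqD !inE qa qB orbT.
have cx : 0 <= c x by apply: c0; rewrite eqD fset1U1.
have relq := relation_coords rel qB; rewrite /d (negbTE qa) in relq.
have cx0 : c x = 0 := mul_pos_add_eq0 lq cx cq relq.
have := relation_coords rel aB; rewrite /d eqxx cx0 mul0r add0r.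
by move/eqP; rewrite oppr_eq0 oner_eq0.
Qed.

Lemma signed_coords_conical : x \notin B /\ conical_position (x |` B).
Proof.
have xB := signed_coords_notin; split=> //; split; first exact: signed_coords_no_conv0.
move=> a /fset1UP[->|aB]; last exact: signed_coords_vertex_notin_pos.
by rewrite fsetU1K //; exact: signed_coords_notin_pos.
Qed.

End SignedCoordinates.

End LinearAlgebra.

Lemma pos_pair_coefs (R : realType) (n : nat) (A B : {fset 'rV[R]_n})
    (u w x : 'rV[R]_n) :
  u \in A -> w \in B -> u != w -> ~ in_span A x -> ~ in_span B x ->
  in_pos [fset u; w] x -> exists a b : R, [/\ 0 < a, 0 < b & x = a *: u + b *: w].
Proof.
move=> uA wB uw xA xB [c [c0 xc]].
rewrite big_fsetU1 ?inE //= big_seq_fset1 in xc.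
have spanZ (C : {fset 'rV[R]_n}) v t : v \in C -> in_span C (t *: v).
  by move=> vC; apply/in_spanP/memvZ/memv_span.
exists (c u), (c w); split => //; rewrite lt_neqAle c0 ?inE ?eqxx ?orbT // andbT.
- by apply/eqP => cu0; apply: xB; rewrite xc -cu0 scale0r add0r; apply: spanZ.
- by apply/eqP => cw0; apply: xA; rewrite xc -cw0 scale0r addr0; apply: spanZ.
Qed.

Section SupportThroughXi.
Variables (R : realType) (n : nat) (X : {fset 'rV[R]_n}).
Variables (k : nat) (Xs : 'I_k -> {fset 'rV[R]_n}) (i j : 'I_k).
Variables (x xi xj y : 'rV[R]_n) (a b : R).
Variables (S : {fset 'rV[R]_n}) (c : 'rV[R]_n -> R).
Hypotheses (HX : standing_setting X) (Hsk : skeleton X Xs) (ij : i != j).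
Hypotheses (xX : x \in X) (xiI : xi \in Xs i) (xjJ : xj \in Xs j).
Hypotheses (a0 : 0 < a) (b0 : 0 < b) (xab : x = a *: xi + b *: xj).
Hypotheses (yX : y \in X) (yNI : y \notin Xs i) (yspan : in_span (Xs i) y).
Hypotheses (SI : S `<=` Xs i) (Smin : forall T, T `<` S -> ~ in_pos T y).
Hypotheses (c0 : forall z, z \in S -> 0 <= c z) (yc : y = \sum_(z <- S) c z *: z).
Hypothesis (xiS : xi \in S).

Local Notation S' := (S `\ xi).
Local Notation T := (xj |` (y |` S')).

Lemma c_pos z : z \in S -> 0 < c z.
Proof. exact: support_coef_pos Smin c0 yc z. Qed.

Lemma y_decomp : y = c xi *: xi + \sum_(z <- S') c z *: z.
Proof. by rewrite yc (big_fsetD1 _ xiS). Qed.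

(* S' is nonempty, since y is not a positive multiple of xi. *)
Lemma support_rest_pos : exists2 s0, s0 \in S' & 0 < c s0.
Proof.
have [S'0|[s0 s0S']] := fset_0Vmem S'; last first.
  by exists s0; rewrite // c_pos //; move: s0S'; rewrite in_fsetD1 => /andP[].
have [_ _ Hmult _] := HX; have [XsX _ _ _] := Hsk.
have yxi : y != xi by apply: contraNneq yNI => ->.
have := y_decomp; rewrite S'0 big_seq_fset0 addr0.
by move/(Hmult _ _ yX (fsubsetP (XsX i) _ xiI) yxi _ (c_pos xiS)).
Qed.

(* Exchange: y replaces xi in the free set S. *)
Lemma y_notin_span_rest : y \notin <<S'>>%VS.
Proof.
have freeS : free S by apply: support_free Smin; exists c.
by rewrite yc; apply: free_exchange freeS xiS _; rewrite gt_eqF ?c_pos.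
Qed.

(* xj is a nonzero vector of another summand of the skeleton. *)
Lemma xj_notin_span : xj \notin <<y |` S'>>%VS.
Proof.
have [X0 _ _ _] := HX; have [XsX _ _ _] := Hsk.
have xj0 : xj != 0 by apply: contraNneq X0 => <-; apply: fsubsetP (XsX j) _ xjJ.
apply: contra xj0 => xjspan; apply/eqP; apply: skeleton_span_meet0 Hsk ij _ _.
  apply/in_spanP; apply: subvP xjspan; apply/span_subvP => z /fset1UP[->|zS'].
    exact/in_spanP.
  by apply/memv_span/(fsubsetP SI); move: zS'; rewrite in_fsetD1 => /andP[].
exact/in_spanP/memv_span.
Qed.

Lemma free_T : [/\ y \notin S', xj \notin y |` S' & free T].
Proof.
have yS' : y \notin S' by apply: contra y_notin_span_rest => /memv_span.
have xjT : xj \notin y |` S' by apply: contra xj_notin_span => /memv_span.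
have freeS : free (xi |` S') by rewrite fsetD1K //; apply: support_free Smin; exists c.
rewrite free_fsetU1 ?fsetD11 // in freeS; case/andP: freeS => _ freeS'.
by split; rewrite // !free_fsetU1 // xj_notin_span y_notin_span_rest.
Qed.

Lemma T_sub_X : T `<=` X.
Proof.
have [XsX _ _ _] := Hsk.
apply/fsubsetP => z /fset1UP[->|/fset1UP[->|zS']] //.
  exact: fsubsetP (XsX j) _ xjJ.
by apply/(fsubsetP (XsX i))/(fsubsetP SI); move: zS'; rewrite in_fsetD1 => /andP[].
Qed.

(* Eliminating xi = (y - sum_S' c z z) / c xi from x = a xi + b xj. *)
Lemma x_coords : x = \sum_(z <- T)
  (if z == xj then b else if z == y then a / c xi else - (a / c xi * c z)) *: z.
Proof.
have [yS' xjT _] := free_T.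
rewrite big_fsetU1 // big_fsetU1 //= eqxx (negbTE (memPn xjT _ (fset1U1 _ _))).
rewrite eqxx (@eq_fbigr _ _ _ _ _ _ _ (fun z => - (a / c xi) *: (c z *: z))); last first.
  move=> z zS' _; rewrite scalerA mulNr.
  rewrite (negbTE (memPn xjT z (fset1Ur _ zS'))) (negbTE (memPn yS' z zS')).
  by [].
rewrite -scaler_sumr y_decomp scalerDr scalerA mulfVK ?gt_eqF ?c_pos //.
by rewrite scaleNr addrK xab addrC.
Qed.

(* The coordinates of x in a basis of n points of X extending T have two
   positive entries (at y and xj) and a negative one (at s0), so x together
   with that basis violates the good-position hypothesis. *)
Lemma support_through_xi_absurd : False.
Proof.
have [_ Hint _ Hgood] := HX; have [yS' xjT freeT] := free_T.
have [B [TB BX freeB cardB]] :=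
  basis_extension (interior_span_full Hint) T_sub_X freeT.
have [s0 s0S' cs0] := support_rest_pos.
have inB z : z \in T -> z \in B := fsubsetP TB z.
have xjT' : xj \in T := fset1U1 _ _.
have yT : y \in T by rewrite fset1Ur ?fset1U1.
have s0T : s0 \in T by rewrite !fset1Ur.
have yxj : y != xj by apply: contraNneq xjT => <-; rewrite fset1U1.
have s0xj : s0 != xj by apply: contraNneq xjT => <-; rewrite fset1Ur.
have s0y : s0 != y by apply: contraNneq yS' => <-.
pose lx z := if z \in T then
  (if z == xj then b else if z == y then a / c xi else - (a / c xi * c z)) else 0.
have xl : x = \sum_(z <- B) lx z *: z := etrans x_coords (sum_coords_incl _ TB).
have cxi := c_pos xiS.
have lxs0 : lx s0 < 0.
  by rewrite /lx s0T (negbTE s0xj) (negbTE s0y) oppr_lt0 mulr_gt0 ?divr_gt0.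
have lxy : 0 < lx y by rewrite /lx yT (negbTE yxj) eqxx divr_gt0.
have lxxj : 0 < lx xj by rewrite /lx xjT' eqxx.
have [xB conical] := signed_coords_conical freeB xl (inB _ s0T) lxs0
  (inB _ yT) (inB _ xjT') yxj lxy lxxj.
apply: (Hgood (x |` B)) conical.
  by apply/fsubsetP => z /fset1UP[->|/(fsubsetP BX)].
by rewrite cardfsU1 xB cardB.
Qed.

End SupportThroughXi.

Theorem proposition5p4 (R : realType) (n : nat) (X : {fset 'rV[R]_n})
    (k : nat) (Xs : 'I_k -> {fset 'rV[R]_n})
    (x xi xj y : 'rV[R]_n) (i j : 'I_k) :
  standing_setting X ->
  skeleton X Xs ->
  x \in X ->
  (forall l : 'I_k, ~ in_span (Xs l) x) ->
  xi \in Xs i -> xj \in Xs j -> i != j ->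
  in_pos [fset xi; xj] x ->
  y \in X -> y \notin Xs i -> in_span (Xs i) y ->
  forall S : {fset 'rV[R]_n}, is_support (Xs i) y S -> xi \notin S.
Proof.
move=> HX Hsk xX Hx xiI xjJ ij Hxpos yX yNI yspan S [SI [c [c0 yc]] Smin].
apply/negP => xiS.
have xixj : xi != xj.
  have ji : j != i by rewrite eq_sym.
  have [_ Hdisj _ _] := Hsk; apply: contraTneq xiI => ->.
  by move/fdisjointP: (Hdisj j i ji); apply.
have [a [b [a0 b0 xab]]] := pos_pair_coefs xiI xjJ xixj (Hx i) (Hx j) Hxpos.
exact: (support_through_xi_absurd HX Hsk ij xX xiI xjJ a0 b0 xab yX yNI yspan
  SI Smin c0 yc xiS).
Qed.
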